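(* There exist a finite family $\mathcal{F}$ of pairwise intersecting compact convex sets in the plane with the $(4,3)$ property (among any four distinct members some three have a common point) and a member $D\in\mathcal{F}$ such that the directed graph $G_D$ contains a directed cycle of length 5.
   Context: For three pairwise intersecting compact convex sets $X,Y,Z$ in the plane: $o(XYZ)=0$ if $X\cap Y\cap Z\neq\emptyset$; otherwise $o(XYZ)=o(xyz)$ for any $x\in Y\cap Z$, $y\in X\cap Z$, $z\in X\cap Y$, where for points $o(xyz)=+1$ for a counterclockwise and $-1$ for a clockwise triangle (independent of the choice). For $D\in\mathcal{F}$, $G_D$ is the directed graph on vertex set $\mathcal{F}\setminus\{D\}$ with an arc from $A$ to $B$ if and only if $o(ABD)=1$. *)

From HB Require Import structures.
From mathcomp Require Import all_boot all_order all_algebra.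
From mathcomp Require Import all_classical all_reals all_analysis.
From mathcomp Require Import Rstruct Rstruct_topology.

Set Implicit Arguments. Unset Strict Implicit. Unset Printing Implicit Defensive.
Import Order.TTheory GRing.Theory Num.Theory.
Local Open Scope classical_set_scope.
Local Open Scope ring_scope.

From Stdlib Require Rdefinitions.
Notation R := Rdefinitions.R.
Definition plane := (R * R)%type.

Definition convex_set (S : set plane) : Prop :=
  forall p q : plane, S p -> S q -> forall t : R, 0 <= t -> t <= 1 ->
    S ((1 - t) * p.1 + t * q.1, (1 - t) * p.2 + t * q.2).

Definition compact_convex (S : set plane) : Prop :=
  @compact (R * R)%type S /\ convex_set S.

(* twice the signed area of the triangle xyz; > 0 iff xyz is counterclockwise *)
Definition orient_det (x y z : plane) : R :=
  (y.1 - x.1) * (z.2 - x.2) - (y.2 - x.2) * (z.1 - x.1).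

(* o(XYZ) = 1 : X, Y, Z have no common plane, and for (any / every) choice
   x in Y∩Z, y in X∩Z, z in X∩Y the triangle xyz is counterclockwise. *)
Definition orient_pos (X Y Z : set plane) : Prop :=
  X `&` Y `&` Z = set0 /\
  forall x y z : plane, (Y `&` Z) x -> (X `&` Z) y -> (X `&` Y) z ->
    0 < orient_det x y z.

Definition pairwise_intersecting (n : nat) (F : 'I_n -> set plane) : Prop :=
  forall i j : 'I_n, F i `&` F j !=set0.

Definition prop43 (n : nat) (F : 'I_n -> set plane) : Prop :=
  forall a b c d : 'I_n, uniq [:: a; b; c; d] ->
    exists i j k : 'I_n,
      [/\ uniq [:: i; j; k], all (fun m => m \in [:: a; b; c; d]) [:: i; j; k]
        & F i `&` F j `&` F k !=set0].

Definition GD_arc (n : nat) (F : 'I_n -> set plane) (d a b : 'I_n) : Prop :=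
  a != d /\ b != d /\ orient_pos (F a) (F b) (F d).

Definition GD_has_cycle (n : nat) (F : 'I_n -> set plane) (d : 'I_n) (k : nat)
  : Prop :=
  exists v : 'I_k -> 'I_n, injective v /\
    forall i : 'I_k, forall j : 'I_k, (val j = (val i).+1 %% k)%N ->
      GD_arc F d (v i) (v j).

(** The family is a rectangle D together with the five ears
    E_a = P_{a-1} P_a P_{a+1} of a convex pentagon P_0 ... P_4 around it.
    Every vertex P_j lies in E_{j-1}, E_j, E_{j+1}, and D meets E_j and
    E_{j+1} on the edge P_j P_{j+1}; every two members lie in one of these
    ten common triples, and every four contain one of them.  Ears two apart
    meet only in the vertex P_{a+1} between them, which lies outside D, so
    o(E_a E_{a+2} D) is the orientation of x, y, P_{a+1} for x in
    E_{a+2} ∩ D and y in E_a ∩ D, and this is counterclockwise.  Hence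
    E_0 -> E_2 -> E_4 -> E_1 -> E_3 -> E_0 is a directed 5-cycle of G_D. *)

From Pilot Require Import Defs.
From mathcomp Require Import all_boot all_order all_algebra.
From mathcomp Require Import all_classical all_reals all_analysis.
From mathcomp Require Import Rstruct Rstruct_topology.
From mathcomp Require Import lra.
Import Order.TTheory GRing.Theory Num.Theory.
Local Open Scope classical_set_scope.
Local Open Scope ring_scope.

Lemma continuous_orient_det (A B : plane) : continuous (orient_det A B).
Proof.
move=> p.
have coord1 : {for p, continuous (fun q : plane => q.1 - A.1 : R^o)}.
  by apply: (@continuousB _ R^o); [exact: cvg_fst | exact: cvg_cst].
have coord2 : {for p, continuous (fun q : plane => q.2 - A.2 : R^o)}.
  by apply: (@continuousB _ R^o); [exact: cvg_snd | exact: cvg_cst].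
apply: (@continuousB _ R^o _ (fun q : plane => (B.1 - A.1) * (q.2 - A.2) : R^o)
  (fun q : plane => (B.2 - A.2) * (q.1 - A.1) : R^o)).
  by apply: (@continuousM _ _ (fun=> B.1 - A.1)) => //; exact: cvg_cst.
by apply: (@continuousM _ _ (fun=> B.2 - A.2)) => //; exact: cvg_cst.
Qed.

Definition polygon (l : seq (plane * plane)) : set plane :=
  [set p | foldr (fun e P => 0 <= orient_det e.1 e.2 p /\ P) True l].

Lemma closed_polygon l : closed (polygon l).
Proof.
elim: l => [|e l IHl]; first exact: closedT.
apply: (@closedI _ (orient_det e.1 e.2 @^-1` [set x | 0 <= x])) => //.
by move/continuous_closedP: (continuous_orient_det e.1 e.2); apply; exact: closed_ge.
Qed.

Lemma convex_polygon l : Defs.convex_set (polygon l).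
Proof.
elim: l => [|e l IHl] //= p q [pe pl] [qe ql] t t0 t1.
split; last exact: IHl.
move: pe qe; rewrite /orient_det /= => pe qe; nra.
Qed.

Lemma compact_in_square (S : set plane) (M : R) :
  closed S -> (forall p, S p -> -M <= p.1 <= M /\ -M <= p.2 <= M) -> compact S.
Proof.
move=> clS SM.
apply: (@subclosed_compact _ _ (`[-M, M]%classic `*` `[-M, M]%classic)).
- exact: clS.
- by apply: compact_setX; exact: segment_compact.
- by move=> p /SM [p1 p2]; split; rewrite /= in_itv /=.
Qed.

Lemma orient_pos_pinned (X Y Z : set plane) (z : plane) :
  X `&` Y `<=` [set z] -> ~ Z z ->
  (forall x y, (Y `&` Z) x -> (X `&` Z) y -> 0 < orient_det x y z) ->
  orient_pos X Y Z.
Proof.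
move=> XYz Zz pos; split; last by move=> x y z' Yx Xy /XYz ->; exact: pos.
by apply/seteqP; split=> // p [/XYz ->].
Qed.

Lemma mem_iota_ord {n} (x : 'I_n) : val x \in iota 0 n.
Proof. by rewrite mem_iota ltn_ord. Qed.

Section CommonTriples.

Variables (n : nat) (F : 'I_n -> set plane) (common : nat -> nat -> nat -> bool).
Hypothesis commonF : forall i j k : 'I_n, common i j k -> F i `&` F j `&` F k !=set0.

Definition has_common_triple (s : seq nat) : bool :=
  has (fun i => has (fun j => has (fun k => uniq [:: i; j; k] && common i j k) s) s) s.

Lemma prop43_of_common :
  all (fun a => all (fun b => all (fun c => all (fun d =>
    uniq [:: a; b; c; d] ==> has_common_triple [:: a; b; c; d])
    (iota 0 n)) (iota 0 n)) (iota 0 n)) (iota 0 n) ->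
  prop43 F.
Proof.
move=> /allP cover a b c d abcd.
move: (cover _ (mem_iota_ord a)) => /allP /(_ _ (mem_iota_ord b)).
move=> /allP /(_ _ (mem_iota_ord c)) /allP /(_ _ (mem_iota_ord d)).
rewrite -[[:: val a; _; _; _]]/(map val [:: a; b; c; d]) (map_inj_uniq val_inj) abcd implyTb.
case/hasP=> _ /mapP [i si ->] /hasP [_ /mapP [j sj ->] /hasP [_ /mapP [k sk ->]]].
rewrite -[[:: val i; _; _]]/(map val [:: i; j; k]) (map_inj_uniq val_inj).
by case/andP=> ijk /commonF meet; exists i, j, k; split; rewrite //= si sj sk.
Qed.

Lemma pairwise_intersecting_of_common :
  all (fun i => all (fun j => has (common i j) (iota 0 n)) (iota 0 n)) (iota 0 n) ->
  pairwise_intersecting F.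
Proof.
move=> /allP cover i j.
move: (cover _ (mem_iota_ord i)) => /allP /(_ _ (mem_iota_ord j)).
case/hasP=> k; rewrite mem_iota => /andP [_ k_lt_n] /(commonF i j (Ordinal k_lt_n)).
by case=> p [[Fip Fjp] _]; exists p.
Qed.

End CommonTriples.

Lemma injective_of_incidence n (U : Type) (F : 'I_n -> set U) (m : nat) (p : nat -> U)
    (inc : nat -> nat -> bool) :
  (forall j (i : 'I_n), (j < m)%N -> F i (p j) <-> inc j i) ->
  all (fun i => all (fun i' =>
    all (fun j => inc j i == inc j i') (iota 0 m) ==> (i == i')) (iota 0 n)) (iota 0 n) ->
  injective F.
Proof.
move=> incE /allP separated i i' Fii'; apply/val_inj/eqP.
move: (separated _ (mem_iota_ord i)) => /allP /(_ _ (mem_iota_ord i')) /implyP; apply.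
apply/allP=> j; rewrite mem_iota => /andP [_ j_lt_m].
apply/eqP; apply/idP/idP => /(incE j _ j_lt_m) h; apply/(incE j _ j_lt_m);
  [by rewrite -Fii' | by rewrite Fii'].
Qed.

Fixpoint vertex (j : nat) : plane :=
  match j with
  | 0 => (0, 6) | 1 => (-6, 2) | 2 => (-4, -4) | 3 => (4, -4) | 4 => (6, 2)
  | j.+4.+1 => vertex j
  end.

Definition ear_edges (a : nat) : seq (plane * plane) :=
  [:: (vertex a.+4, vertex a); (vertex a, vertex a.+1); (vertex a.+1, vertex a.+4)].

Definition rectangle_edges : seq (plane * plane) :=
  [:: ((-4, -2), (4, -2)); ((4, -2), (4, 4)); ((4, 4), (-4, 4)); ((-4, 4), (-4, -2))].

(* Members 1..5 are the ears E_0, E_2, E_4, E_1, E_3, in the order of the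
   5-cycle of G_D. *)
Definition member (k : nat) : set plane :=
  polygon (match k with
           | 1 => ear_edges 0 | 2 => ear_edges 2 | 3 => ear_edges 4
           | 4 => ear_edges 1 | 5 => ear_edges 3 | _ => rectangle_edges
           end).

Definition family (i : 'I_6) : set plane := member i.

Ltac unfold_config :=
  rewrite /member /ear_edges /rectangle_edges /polygon /orient_det /=.
Ltac split_hyps :=
  repeat match goal with h : _ /\ _ |- _ => case: h => ? ? end.

Lemma ear_arc a :
  orient_pos (polygon (ear_edges a)) (polygon (ear_edges a.+2)) (polygon rectangle_edges).
Proof.
elim/ltn_ind: a => a IH; have [|a_lt5] := leqP 5 a.
  by case: a IH => [|[|[|[|[|a]]]]] // IH _; apply: (IH a); rewrite ltnS -addn4 leq_addr.
apply: (@orient_pos_pinned _ _ _ (vertex a.+1)); clear IH; move: a_lt5.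
- do 5?[case: a => [|a] //] => _ [p1 p2] [];
    unfold_config => *; split_hyps; congr (_, _); lra.
- by do 5?[case: a => [|a] //] => _; unfold_config => *; split_hyps; lra.
- do 5?[case: a => [|a] //] => _ [x1 x2] [y1 y2] [] + + [];
    unfold_config => *; split_hyps; nra.
Qed.

Definition incident (j : nat) : seq nat :=
  nth [::] [:: [:: 1; 3; 4]; [:: 1; 2; 4]; [:: 2; 4; 5]; [:: 2; 3; 5]; [:: 1; 3; 5]] j.

Lemma member_vertexE j k : (j < 5)%N -> member k (vertex j) <-> k \in incident j.
Proof.
do 5?[case: j => [|j] //] => _; do 6?[case: k => [|k]];
  unfold_config; rewrite !inE /=; split=> h; split_hyps; by [ | repeat split; lra | lra].
Qed.

Definition common_triples : seq (seq nat * plane) :=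
  [seq (incident j, vertex j) | j <- iota 0 5] ++
  [:: ([:: 0; 1; 4], (-2, 3)); ([:: 0; 2; 4], (-3, 0)); ([:: 0; 2; 5], (0, -2));
      ([:: 0; 3; 5], (3, 0)); ([:: 0; 1; 3], (2, 3))].

Lemma common_triple_witness t k : t \in common_triples -> k \in t.1 -> member k t.2.
Proof.
rewrite mem_cat => /orP [/mapP [j] | ].
  by rewrite mem_iota => /andP [_ j_lt5] -> /(member_vertexE _ _ j_lt5).
rewrite !in_cons in_nil => tc.
repeat case/predU1P: tc => [-> | tc] //; rewrite /= !inE => /or3P [] /eqP ->;
  unfold_config; repeat split; lra.
Qed.

Definition listed_common (i j k : nat) : bool :=
  has (fun t => all (mem t.1) [:: i; j; k]) common_triples.

Lemma listed_common_meet (i j k : 'I_6) :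
  listed_common i j k -> family i `&` family j `&` family k !=set0.
Proof.
case/hasP => t tc /and4P [ti tj tk _].
by exists t.2; split; [split|]; exact: common_triple_witness.
Qed.

Lemma family_prop43 : prop43 family.
Proof. by apply: (@prop43_of_common _ _ listed_common listed_common_meet); vm_compute. Qed.

Lemma family_pairwise_intersecting : pairwise_intersecting family.
Proof.
by apply: (@pairwise_intersecting_of_common _ _ listed_common listed_common_meet);
  vm_compute.
Qed.

Lemma family_injective : injective family.
Proof.
apply: (@injective_of_incidence _ _ _ 3 vertex (fun j k => k \in incident j)); last first.
  by vm_compute.
by move=> j i j_lt3; apply: member_vertexE; exact: ltn_trans j_lt3 _.
Qed.

Lemma member_bounded k p : member k p -> -6 <= p.1 <= 6 /\ -6 <= p.2 <= 6.
Proof.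
case: p => p1 p2; do 6?[case: k => [|k]]; unfold_config => h; split_hyps;
  by split; apply/andP; split; lra.
Qed.

Lemma family_compact_convex i : compact_convex (family i).
Proof.
split; last exact: convex_polygon.
apply: (@compact_in_square _ 6); first exact: closed_polygon.
exact: member_bounded.
Qed.

Lemma family_cycle : GD_has_cycle family ord0 5.
Proof.
exists (lift ord0); split=> [|i j ij]; first exact: lift_inj.
have -> : j = ordS i by exact: val_inj.
split; first by rewrite eq_sym neq_lift.
split; first by rewrite eq_sym neq_lift.
case: i {j ij} => -[|[|[|[|[|//]]]]] i_lt5;
  [exact: (ear_arc 0) | exact: (ear_arc 2) | exact: (ear_arc 4) | exact: (ear_arc 1)
  | exact: (ear_arc 3)].
Qed.

Theorem claim9 :
  exists (n : nat) (F : 'I_n -> set plane),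
    injective F /\
    (forall i, compact_convex (F i)) /\
    pairwise_intersecting F /\
    prop43 F /\
    exists D : 'I_n, GD_has_cycle F D 5.
Proof.
exists 6, family; split; first exact: family_injective.
split; first exact: family_compact_convex.
split; first exact: family_pairwise_intersecting.
split; first exact: family_prop43.
by exists ord0; exact: family_cycle.
Qed.
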